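(* Let $K$ be a field, $n\ge 2$, $R=K[x_1,\dots,x_n]$, and let $\boldsymbol{\lambda}=(\lambda_1,\dots,\lambda_n)$ be a vector of positive integers. Put $\ell=\mathrm{lcm}(\lambda_1,\dots,\lambda_{n-1})$ and $\boldsymbol{\lambda}'=(\lambda_1,\dots,\lambda_{n-1},\lambda_n+\ell)$. If $I(\boldsymbol{\lambda}')$ is normal then $I(\boldsymbol{\lambda})$ is normal. If moreover $\lambda_n\ge \ell$ and $I(\boldsymbol{\lambda})$ is normal, then $I(\boldsymbol{\lambda}')$ is normal.
   Context: For a vector $\boldsymbol{\mu}=(\mu_1,\dots,\mu_n)$ of positive integers, $J(\boldsymbol{\mu})=(x_1^{\mu_1},\dots,x_n^{\mu_n})\subseteq R$ and $I(\boldsymbol{\mu})=\overline{J(\boldsymbol{\mu})}$ is its integral closure in $R$. An ideal $I$ of an integral domain is normal if $I^m$ is integrally closed for every positive integer $m$. *)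

From HB Require Import structures.
From mathcomp Require Import all_boot all_order all_algebra.
From mathcomp Require Import mpoly.
Set Implicit Arguments. Unset Strict Implicit. Unset Printing Implicit Defensive.
Import GRing.Theory.
Local Open Scope ring_scope.

Section Ideals.
Variable R : comNzRingType.

Definition ideal_gen (S : R -> Prop) : R -> Prop :=
  fun f => exists (k : nat) (g c : 'I_k -> R),
    (forall i, S (g i)) /\ f = \sum_(i < k) c i * g i.

Definition ideal_mul (I J : R -> Prop) : R -> Prop :=
  ideal_gen (fun f => exists a b, I a /\ J b /\ f = a * b).

Fixpoint ideal_pow (I : R -> Prop) (m : nat) : R -> Prop :=
  match m with
  | 0%N => fun _ => True
  | m'.+1 => ideal_mul I (ideal_pow I m')
  end.

Definition integral_closure (I : R -> Prop) : R -> Prop :=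
  fun f => exists (m : nat) (a : nat -> R),
    (0 < m)%N /\ (forall i, (1 <= i <= m)%N -> ideal_pow I i (a i)) /\
    f ^+ m + \sum_(1 <= i < m.+1) a i * f ^+ (m - i) = 0.

Definition integrally_closed (I : R -> Prop) : Prop :=
  forall f, integral_closure I f -> I f.

Definition normal_ideal (I : R -> Prop) : Prop :=
  forall m : nat, (0 < m)%N -> integrally_closed (ideal_pow I m).

End Ideals.

Definition Jmu (K : fieldType) (n : nat) (mu : 'I_n -> nat) : {mpoly K[n]} -> Prop :=
  ideal_gen (fun f => exists i : 'I_n, f = 'X_i ^+ (mu i)).

Definition Imu (K : fieldType) (n : nat) (mu : 'I_n -> nat) : {mpoly K[n]} -> Prop :=
  integral_closure (@Jmu K n mu).

(* l = lcm(lambda_1, ..., lambda_{n-1}) (0-indexed: indices i < n-1). *)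
Definition lcm_init (n : nat) (lam : 'I_n -> nat) : nat :=
  \big[lcmn/1%N]_(i < n | (val i < n.-1)%N) lam i.

Definition lam_shift (n : nat) (lam : 'I_n -> nat) : 'I_n -> nat :=
  fun i => if val i == n.-1 then (lam i + lcm_init lam)%N else lam i.

(* Let om_i be weights with mu_i * om_i = D for all i. A valuation argument
   (integral closure cannot lower the least weight of a monomial of a
   polynomial) shows that I(mu) is spanned by the monomials x^b of weight
   sum_i b_i om_i >= D, so I(mu) is normal iff the polyhedron
   {v >= 0 | sum_i v_i om_i >= D} has the integer decomposition property:
   every lattice point of weight >= k D dominates a sum of k lattice points of
   weight >= D.
   For mu = (lam_1, ..., lam_(n-1), M) take om_i = (l / lam_i) M for i < n and
   om_n = l, so that with w(b) = sum_(i<n) b_i l / lam_i the good points are the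
   b with w(b) M + b_n l >= l M. Decompositions for M and for M + l correspond
   by shifting the last coordinate of each summand b by l - w(b); the total
   shift stays within the budget of the point being decomposed, which for the
   passage from M to M + l is where l <= M is needed. *)

From HB Require Import structures.
From mathcomp Require Import all_boot all_order all_algebra.
From mathcomp Require Import mpoly.
From mathcomp Require Import zify ring.
Set Implicit Arguments. Unset Strict Implicit. Unset Printing Implicit Defensive.
Import GRing.Theory.

Local Open Scope ring_scope.

Section IdealArithmetic.
Variable R : comNzRingType.
Implicit Types (S I : R -> Prop) (x y : R).

Lemma ideal_gen_base S x : S x -> ideal_gen S x.
Proof.
by move=> Sx; exists 1%N, (fun=> x), (fun=> 1); rewrite big_ord1 mul1r.
Qed.

Lemma ideal_gen0 S : ideal_gen S 0.
Proof. by exists 0%N, (fun=> 0), (fun=> 0); rewrite big_ord0; split=> // -[]. Qed.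

Lemma ideal_genD S x y : ideal_gen S x -> ideal_gen S y -> ideal_gen S (x + y).
Proof.
move=> [k1 [g1 [c1 [Sg1 ->]]]] [k2 [g2 [c2 [Sg2 ->]]]].
pose glue T (u : 'I_k1 -> T) (v : 'I_k2 -> T) i :=
  match split i with inl a => u a | inr b => v b end.
exists (k1 + k2)%N, (glue R g1 g2), (glue R c1 c2); split.
  by move=> i; rewrite /glue; case: (split i).
rewrite big_split_ord /glue; congr (_ + _); apply: eq_bigr => i _.
  by rewrite (unsplitK (inl i)).
by rewrite (unsplitK (inr i)).
Qed.

Lemma ideal_genMl S r x : ideal_gen S x -> ideal_gen S (r * x).
Proof.
move=> [k [g [c [Sg ->]]]]; exists k, g, (fun i => r * c i); split=> //.
by rewrite mulr_sumr; apply: eq_bigr => i _; rewrite mulrA.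
Qed.

Lemma ideal_pow0 I p : ideal_pow I p 0.
Proof. by case: p => [|p] //=; apply: ideal_gen0. Qed.

Lemma ideal_powD I p x y : ideal_pow I p x -> ideal_pow I p y -> ideal_pow I p (x + y).
Proof. by case: p => [|p] //=; apply: ideal_genD. Qed.

Lemma ideal_powMl I p r x : ideal_pow I p x -> ideal_pow I p (r * x).
Proof. by case: p => [|p] //=; apply: ideal_genMl. Qed.

Lemma ideal_pow_sum I p (T : Type) (r : seq T) (P : pred T) (F : T -> R) :
  (forall i, P i -> ideal_pow I p (F i)) -> ideal_pow I p (\sum_(i <- r | P i) F i).
Proof. by apply: big_ind; [apply: ideal_pow0 | apply: ideal_powD]. Qed.

Lemma ideal_powS_mul I p x y : I x -> ideal_pow I p y -> ideal_pow I p.+1 (x * y).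
Proof. by move=> Ix Iy; apply: ideal_gen_base; exists x, y. Qed.

Lemma ideal_pow_prod (T : eqType) I (s : seq T) (F : T -> R) p :
  {in s, forall t, I (F t)} -> (p <= size s)%N -> ideal_pow I p (\prod_(t <- s) F t).
Proof.
elim: s p => [|t s IHs] [|p] //= Is le_ps; rewrite big_cons.
apply: ideal_powS_mul; first by apply: Is; rewrite mem_head.
by apply: IHs => // u us; apply: Is; rewrite inE us orbT.
Qed.

Lemma ideal_pow_pow_prod I (s : seq R) k N :
  {in s, forall x, I x} -> (k * N <= size s)%N ->
  ideal_pow (ideal_pow I k) N (\prod_(x <- s) x).
Proof.
elim: N s => [|N IHN] s //= Is; rewrite mulnS => le_kNs.
rewrite -(cat_take_drop k s) big_cat /=; apply: ideal_powS_mul.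
  apply: ideal_pow_prod => [x /mem_take|]; first exact: Is.
  by rewrite size_take; case: ltnP => // _; apply: leq_trans le_kNs; rewrite leq_addr.
apply: IHN => [x /mem_drop|]; first exact: Is.
by rewrite size_drop leq_subRL // (leq_trans (leq_addr _ _) le_kNs).
Qed.

Lemma integral_closure_pow I x N :
  (0 < N)%N -> ideal_pow I N (x ^+ N) -> integral_closure I x.
Proof.
move=> N_gt0 IxN; exists N, (fun i => if i == N then - x ^+ N else 0).
split=> //; split.
  move=> i _; case: eqP => [->|_]; last exact: ideal_pow0.
  by rewrite -mulN1r; apply: ideal_powMl.
rewrite big_nat_recr //= eqxx subnn expr0 mulr1 big1_seq ?add0r ?subrr //.
move=> i /andP [_]; rewrite mem_index_iota => /andP [_ lt_iN].
by rewrite (ltn_eqF lt_iN) mul0r.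
Qed.

End IdealArithmetic.

Section MonomialSupport.
Variables (R : comNzRingType) (n : nat).
Implicit Types (f g : {mpoly R[n]}) (Q : 'X_{1..n} -> Prop).

Definition supp_in Q f := forall m, m \in msupp f -> Q m.

Lemma supp_in0 Q : supp_in Q 0.
Proof. by move=> m; rewrite msupp0. Qed.

Lemma supp_inD Q f g : supp_in Q f -> supp_in Q g -> supp_in Q (f + g).
Proof. by move=> Qf Qg m /msuppD_le; rewrite mem_cat => /orP [/Qf|/Qg]. Qed.

Lemma supp_inN Q f : supp_in Q f -> supp_in Q (- f).
Proof. by move=> Qf m; rewrite (perm_mem (msuppN f)) => /Qf. Qed.

Lemma supp_inZ Q c f : supp_in Q f -> supp_in Q (c *: f).
Proof. by move=> Qf m /msuppZ_le /Qf. Qed.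

Lemma supp_inX Q m : Q m -> supp_in Q 'X_[m].
Proof. by move=> Qm m'; rewrite msuppX mem_seq1 => /eqP ->. Qed.

Lemma supp_in_sub Q Q' f : (forall m, Q m -> Q' m) -> supp_in Q f -> supp_in Q' f.
Proof. by move=> QQ' Qf m /Qf /QQ'. Qed.

Lemma supp_in_sum Q (I : Type) (r : seq I) (P : pred I) (F : I -> {mpoly R[n]}) :
  (forall i, P i -> supp_in Q (F i)) -> supp_in Q (\sum_(i <- r | P i) F i).
Proof. by apply: big_ind; [apply: supp_in0 | apply: supp_inD]. Qed.

Lemma supp_inM Q1 Q2 Q f g :
  (forall m1 m2, Q1 m1 -> Q2 m2 -> Q (m1 + m2)%MM) ->
  supp_in Q1 f -> supp_in Q2 g -> supp_in Q (f * g).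
Proof.
move=> QD Qf Qg; rewrite (mpolyE f) (mpolyE g) mulr_suml big_seq.
apply: supp_in_sum => m1 /Qf Qm1; rewrite mulr_sumr big_seq.
apply: supp_in_sum => m2 /Qg Qm2.
rewrite -scalerAl -scalerAr -mpolyXD; do 2 apply: supp_inZ.
by apply: supp_inX; apply: QD.
Qed.

Lemma supp_in_eq0 Q f : (forall m, ~ Q m) -> supp_in Q f -> f = 0.
Proof.
move=> notQ Qf; apply: msuppnil0; case E: (msupp f) => [|m s] //.
by have := Qf m; rewrite E mem_head => /(_ isT) /notQ.
Qed.

Lemma supp_in_ideal_gen Q (S : {mpoly R[n]} -> Prop) f :
  (forall m1 m2, Q m2 -> Q (m1 + m2)%MM) -> (forall x, S x -> supp_in Q x) ->
  ideal_gen S f -> supp_in Q f.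
Proof.
move=> Q_up QS [k [g [c [Sg ->]]]]; apply: supp_in_sum => i _.
apply: (@supp_inM (fun=> True) Q) => // [m1 m2 _|]; [exact: Q_up | exact: QS].
Qed.

Lemma supp_in_ideal_pow (Q : nat -> 'X_{1..n} -> Prop) (I : {mpoly R[n]} -> Prop) p f :
  (forall m, Q 0%N m) ->
  (forall p1 p2 m1 m2, Q p1 m1 -> Q p2 m2 -> Q (p1 + p2)%N (m1 + m2)%MM) ->
  (forall x, I x -> supp_in (Q 1%N) x) ->
  ideal_pow I p f -> supp_in (Q p) f.
Proof.
move=> Q0 QD QI; elim: p f => [|p IHp] f /=; first by move=> _ m _; apply: Q0.
apply: supp_in_ideal_gen => [m1 m2|_ [a [b [Ia [Ib ->]]]]].
  by rewrite -[p.+1]add0n; apply: QD.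
by apply: (supp_inM _ (QI _ Ia) (IHp _ Ib)) => m1 m2; rewrite -add1n; apply: QD.
Qed.

End MonomialSupport.

Section WeightFiltration.
Variables (R : idomainType) (n : nat) (mf : measure n).
Implicit Types (f g h r : {mpoly R[n]}) (I : {mpoly R[n]} -> Prop).
Local Notation wt_ge t := (supp_in (fun m => t <= mf m)%N).
Local Notation wt_eq t := (supp_in (fun m => mf m == t)).

Lemma mfMn m k : mf (m *+ k)%MM = (k * mf m)%N.
Proof. by elim: k => [|k IHk]; rewrite ?mulm0n ?mf0 // mulmS mfD IHk mulSn. Qed.

Lemma supp_in_wt_ge_mul s t f g : wt_ge s f -> wt_ge t g -> wt_ge (s + t)%N (f * g).
Proof. by apply: supp_inM => m1 m2 le1 le2; rewrite mfD leq_add. Qed.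

Lemma supp_in_wt_ge_exp j t f : wt_ge t f -> wt_ge (j * t)%N (f ^+ j).
Proof.
move=> tf; elim: j => [|j IHj]; first by rewrite expr0 -mpolyX0; apply: supp_inX.
by rewrite exprSr mulSnr; apply: supp_in_wt_ge_mul.
Qed.

Lemma supp_in_wt_eq_exp j t f : wt_eq t f -> wt_eq (j * t)%N (f ^+ j).
Proof.
move=> tf; elim: j => [|j IHj].
  by rewrite expr0 -mpolyX0; apply: supp_inX; rewrite mf0.
rewrite exprSr mulSnr; apply: (supp_inM _ IHj tf) => m1 m2 /eqP e1 /eqP e2.
by rewrite mfD e1 e2.
Qed.

Lemma supp_in_ideal_pow_wt_ge I t p f :
  (forall x, I x -> wt_ge t x) -> ideal_pow I p f -> wt_ge (p * t)%N f.
Proof.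
move=> tI; apply: (supp_in_ideal_pow (Q := fun p m => p * t <= mf m)%N) => //.
  by move=> p1 p2 m1 m2 le1 le2; rewrite mfD mulnDl leq_add.
by move=> x /tI; apply: supp_in_sub => m; rewrite mul1n.
Qed.

Lemma wt_ge_split t f : wt_ge t f ->
  exists h r, [/\ f = h + r, wt_eq t h & wt_ge t.+1 r].
Proof.
move=> tf; rewrite (mpolyE f) (bigID (fun m => mf m == t)) /=.
set h := (X in X + _); set r := (X in _ + X); exists h, r; split=> //.
  by apply: supp_in_sum => m mt; apply: supp_inZ; apply: supp_inX.
rewrite /r big_seq_cond; apply: supp_in_sum => m /andP [/tf le_tm ne_mt].
by apply: supp_inZ; apply: supp_inX; rewrite ltn_neqAle eq_sym ne_mt.
Qed.

Lemma wt_ge_exprD_sub t h r j : wt_ge t h -> wt_ge t.+1 r ->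
  wt_ge (j * t).+1 ((h + r) ^+ j - h ^+ j).
Proof.
move=> th tr; elim: j => [|j IHj]; first by rewrite subrr; apply: supp_in0.
have -> : (h + r) ^+ j.+1 - h ^+ j.+1 =
          h ^+ j * r + ((h + r) ^+ j - h ^+ j) * (h + r) by rewrite !exprSr; ring.
have thr : wt_ge t (h + r).
  by apply: supp_inD th (supp_in_sub _ tr) => m /ltnW.
apply: supp_inD; rewrite mulSnr.
  by rewrite -addnS; apply: supp_in_wt_ge_mul (supp_in_wt_ge_exp (j := j) th) tr.
by rewrite -addSn; apply: supp_in_wt_ge_mul IHj thr.
Qed.

Section IntegralClosure.
Variables (I : {mpoly R[n]} -> Prop) (c : nat).
Hypothesis I_pow_wt : forall i x, (0 < i)%N -> ideal_pow I i x -> wt_ge (i * c)%N x.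

(* h below is the weight-t initial form of f: if t < c, the equation of integral
   dependence forces h^N = 0, since all its other terms have weight > N t. *)
Lemma integral_closure_wt_step f t :
  integral_closure I f -> (t < c)%N -> wt_ge t f -> wt_ge t.+1 f.
Proof.
move=> [N [a [N_gt0 [Ia dep_f]]]] lt_tc tf.
have [h [r [def_f th tr]]] := wt_ge_split tf.
have tail_wt : wt_ge (N * t).+1 (\sum_(1 <= i < N.+1) a i * f ^+ (N - i)).
  rewrite big_seq; apply: supp_in_sum => i; rewrite mem_index_iota => /andP [i_gt0 le_iN].
  have -> : (N * t = i * t + (N - i) * t)%N by rewrite -mulnDl subnKC.
  rewrite -addSn; apply: supp_in_wt_ge_mul (supp_in_wt_ge_exp (j := N - i) tf).
  apply: supp_in_sub (I_pow_wt i_gt0 (Ia i _)); last by rewrite i_gt0.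
  by move=> m; apply: leq_trans; rewrite ltn_pmul2l.
have hN_gt : wt_ge (N * t).+1 (h ^+ N).
  have -> : h ^+ N = - ((f ^+ N - h ^+ N) + \sum_(1 <= i < N.+1) a i * f ^+ (N - i)).
    by rewrite addrAC dep_f sub0r opprK.
  apply: supp_inN; apply: supp_inD tail_wt; rewrite def_f.
  by apply: wt_ge_exprD_sub tr; apply: supp_in_sub th => m /eqP ->.
have hN0 : h ^+ N = 0.
  apply: (supp_in_eq0 (Q := fun m => (mf m == N * t) && (N * t < mf m))%N).
    by move=> m /andP [/eqP ->]; rewrite ltnn.
  by move=> m m_hN; rewrite (supp_in_wt_eq_exp (j := N) th m_hN) hN_gt.
move/eqP: hN0; rewrite expf_eq0 N_gt0 /= => /eqP h0.
by rewrite def_f h0 add0r.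
Qed.

Lemma integral_closure_wt_ge f : integral_closure I f -> wt_ge c f.
Proof.
move=> If; suff tf t : (t <= c)%N -> wt_ge t f by apply: tf.
elim: t => [_ m _ //|t IHt lt_tc].
exact: integral_closure_wt_step If lt_tc (IHt (ltnW lt_tc)).
Qed.

End IntegralClosure.
End WeightFiltration.

Lemma lepm0 n (m : 'X_{1..n}) : (0 <= m)%MM.
Proof. by apply/mnm_lepP => i; rewrite mnm0E. Qed.

Lemma lepm_add n (m1 m2 m1' m2' : 'X_{1..n}) :
  (m1 <= m1')%MM -> (m2 <= m2')%MM -> (m1 + m2 <= m1' + m2')%MM.
Proof.
by move=> /mnm_lepP le1 /mnm_lepP le2; apply/mnm_lepP => i; rewrite !mnmDE leq_add.
Qed.

Section IntegerDecomposition.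
Variables (n : nat) (mf : measure n) (D : nat).

Definition decomposable k (a : 'X_{1..n}) := exists s : seq 'X_{1..n},
  [/\ size s = k, all (fun b => D <= mf b)%N s & (\sum_(b <- s) b <= a)%MM].

Definition integer_decomposition := forall k a, (k * D <= mf a)%N -> decomposable k a.

End IntegerDecomposition.

Section WeightedMonomialIdeal.
Variables (K : fieldType) (n : nat) (mu : 'I_n -> nat) (mf : measure n) (D : nat).
Hypothesis D_gt0 : (0 < D)%N.
Hypothesis mu_mf : forall i, (mu i * mf U_(i)%MM = D)%N.
Local Notation wt_ge t := (supp_in (fun m => t <= mf m)%N).
Local Notation J := (@Jmu K n mu).
Local Notation I := (@Imu K n mu).

Lemma Jmu_wt_ge x : J x -> wt_ge D x.
Proof.
apply: supp_in_ideal_gen => [m1 m2|_ [i ->]].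
  by rewrite mfD => le_D2; apply: leq_trans le_D2 (leq_addl _ _).
by rewrite mpolyXn; apply: supp_inX; rewrite mfMn mu_mf.
Qed.

Lemma Imu_wt_ge x : I x -> wt_ge D x.
Proof.
apply: integral_closure_wt_ge => i y _.
by apply: supp_in_ideal_pow_wt_ge; apply: Jmu_wt_ge.
Qed.

Lemma mpolyX_exp_prod_gens b : exists s : seq {mpoly K[n]},
  [/\ {in s, forall x, exists i, x = 'X_i ^+ mu i}, size s = mf b
    & \prod_(x <- s) x = 'X_[b] ^+ D].
Proof.
exists (flatten [seq nseq (b i * mf U_(i)%MM) ('X_i ^+ mu i) | i <- index_enum 'I_n]).
split.
- move=> x /flattenP [s /mapP [i _ ->]]; rewrite mem_nseq => /andP [_ /eqP ->].
  by exists i.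
- rewrite size_flatten sumnE /shape -map_comp big_map (mfE _ b).
  by apply: eq_bigr => i _; rewrite /= size_nseq.
- rewrite big_flatten /= big_map mpolyXE_id -prodrXl; apply: eq_bigr => i _.
  by rewrite big_nseq iter_mulr_1 -!exprM mulnCA mu_mf.
Qed.

Lemma Imu_X b : (D <= mf b)%N -> I 'X_[b].
Proof.
move=> le_Db; have [s [s_gens size_s prod_s]] := mpolyX_exp_prod_gens b.
apply: (integral_closure_pow D_gt0); rewrite -prod_s.
apply: ideal_pow_prod => [x /s_gens [i ->]|]; last by rewrite size_s.
by apply: ideal_gen_base; exists i.
Qed.

Lemma integral_closure_Imu_pow_X k a :
  (k * D <= mf a)%N -> integral_closure (ideal_pow I k) 'X_[a].
Proof.
move=> le_kDa; have [s [s_gens size_s prod_s]] := mpolyX_exp_prod_gens a.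
apply: (integral_closure_pow D_gt0); rewrite -prod_s.
apply: ideal_pow_pow_prod => [x /s_gens [i ->]|]; last by rewrite size_s.
by rewrite mpolyXn; apply: Imu_X; rewrite mfMn mu_mf.
Qed.

Lemma Imu_pow_decomposable k x : ideal_pow I k x -> supp_in (decomposable mf D k) x.
Proof.
apply: supp_in_ideal_pow => [m|p1 p2 m1 m2 [s1 [size1 D_s1 le_s1]] [s2 [size2 D_s2 le_s2]]|].
- by exists [::]; split=> //; rewrite big_nil lepm0.
- exists (s1 ++ s2); split; first by rewrite size_cat size1 size2.
    by rewrite all_cat D_s1 D_s2.
  by rewrite big_cat lepm_add.
- move=> y /Imu_wt_ge D_y m /D_y le_Dm; exists [:: m]; split=> //; first by rewrite /= le_Dm.
  by rewrite big_seq1 lepm_refl.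
Qed.

Lemma Imu_pow_of_decomposable k f : supp_in (decomposable mf D k) f -> ideal_pow I k f.
Proof.
move=> dec_f; rewrite (mpolyE f) big_seq; apply: ideal_pow_sum => m /dec_f [s [size_s D_s le_s]].
rewrite -mul_mpolyC; apply: ideal_powMl.
rewrite -(submK le_s) mpolyXD; apply: ideal_powMl.
rewrite -[X in 'X_[X]]big_filter -mpolyX_prod big_filter.
apply: ideal_pow_prod => [b b_s|]; last by rewrite size_s.
by apply: Imu_X; move/allP: D_s; apply.
Qed.

Lemma normal_Imu_iff : normal_ideal I <-> integer_decomposition mf D.
Proof.
split=> [normal_I [|k] a le_kDa|idp_mf k _ f If].
- by exists [::]; split=> //; rewrite big_nil lepm0.
- have := normal_I k.+1 isT _ (integral_closure_Imu_pow_X le_kDa).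
  by move/Imu_pow_decomposable; apply; rewrite msuppX mem_head.
apply: Imu_pow_of_decomposable => m m_f; apply: idp_mf; move: m m_f.
apply: (integral_closure_wt_ge _ If) => i x _ Ix.
apply: (supp_in_ideal_pow_wt_ge _ Ix) => y Iy.
by apply: (supp_in_ideal_pow_wt_ge _ Iy); apply: Imu_wt_ge.
Qed.

End WeightedMonomialIdeal.

Lemma sum_const_le (T : Type) (r : seq T) (F : T -> nat) c :
  (forall x, c <= F x)%N -> (size r * c <= \sum_(x <- r) F x)%N.
Proof.
move=> le_cF; rewrite mulnC -iter_addn_0 -count_predT -big_const_seq.
exact: leq_sum.
Qed.

Lemma sum_subn_leq (T : eqType) (r : seq T) (F G : T -> nat) c :
  {in r, forall x, G x <= F x}%N -> (\sum_(x <- r) F x <= c + \sum_(x <- r) G x)%N ->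
  (\sum_(x <- r) (F x - G x) <= c)%N.
Proof.
move=> le_GF le_F; rewrite -(leq_add2r (\sum_(x <- r) G x)) -big_split /=.
by rewrite (eq_big_seq F) // => x /le_GF /subnK.
Qed.

Lemma ceil_mul_between x d : (0 < d)%N -> exists q, (x <= q * d < x + d)%N.
Proof.
move=> d_gt0; exists ((x + d.-1) %/ d)%N.
by have := divn_eq (x + d.-1)%N d; have := ltn_pmod (x + d.-1)%N d_gt0; nia.
Qed.

Section StretchedWeight.
Variables (n : nat) (wo : measure n) (lst : 'I_n) (l : nat).
Hypothesis wo_lst : wo U_(lst)%MM = 0%N.
Implicit Types (m a b : 'X_{1..n}) (s : seq 'X_{1..n}).

Definition stretch M m := (wo m * M + m lst * l)%N.

Lemma stretch0 M : stretch M 0%MM = 0%N.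
Proof. by rewrite /stretch mf0 mnm0E. Qed.

Lemma stretchD M : {morph stretch M : m1 m2 / (m1 + m2)%MM >-> (m1 + m2)%N}.
Proof. by move=> m1 m2; rewrite /stretch mfD mnmDE !mulnDl addnACA. Qed.

HB.instance Definition _ M := isMeasure.Build n (stretch M) (stretch0 M) (stretchD M).

Definition with_lst m y := [multinom if i == lst then y else m i | i < n].

Lemma with_lstE m y i : with_lst m y i = if i == lst then y else m i.
Proof. by rewrite mnmE. Qed.

Lemma with_lst_id m : with_lst m (m lst) = m.
Proof. by apply/mnmP => i; rewrite with_lstE; case: eqP => [->|]. Qed.

Lemma with_lstK m y z : with_lst (with_lst m y) z = with_lst m z.
Proof. by apply/mnmP => i; rewrite !with_lstE; case: eqP. Qed.

Lemma wo_with_lst m y : wo (with_lst m y) = wo m.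
Proof.
rewrite [LHS]mfE [RHS]mfE; apply: eq_bigr => i _; rewrite with_lstE.
by case: eqP => [->|//]; rewrite wo_lst !muln0.
Qed.

Lemma stretch_with_lst M m y : stretch M (with_lst m y) = (wo m * M + y * l)%N.
Proof. by rewrite /stretch wo_with_lst with_lstE eqxx. Qed.

Lemma wo_sum_le s a : (\sum_(b <- s) b <= a)%MM -> (\sum_(b <- s) wo b <= wo a)%N.
Proof.
rewrite -(big_morph wo mfD mf0) => /mnm_lepP le_sa; rewrite [X in (X <= _)%N]mfE mfE.
by apply: leq_sum => i _; rewrite leq_mul2r le_sa orbT.
Qed.

Lemma lst_sum_le s a : (\sum_(b <- s) b <= a)%MM -> (\sum_(b <- s) b lst <= a lst)%N.
Proof. by move/mnm_lepP/(_ lst); rewrite mnm_sumE. Qed.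

Lemma le_sum_with_lst s (g : 'X_{1..n} -> nat) a y :
  (\sum_(b <- s) b <= a)%MM -> (\sum_(b <- s) g b <= y)%N ->
  (\sum_(b <- s) with_lst b (g b) <= with_lst a y)%MM.
Proof.
move=> /mnm_lepP le_sa le_gy; apply/mnm_lepP => i.
rewrite mnm_sumE with_lstE; under eq_bigr do rewrite with_lstE.
by case: eqP => // _; have := le_sa i; rewrite mnm_sumE.
Qed.

Lemma integer_decomposition_stretch_sub M :
  integer_decomposition (stretch (M + l)) (l * (M + l)) ->
  integer_decomposition (stretch M) (l * M).
Proof.
move=> idp k a le_a; set K := (k * l - wo a)%N.
have [s [size_s valid_s le_s]] :
    decomposable (stretch (M + l)) (l * (M + l)) k (with_lst a (a lst + K)).
  by apply: idp; rewrite /= stretch_with_lst; move: le_a; rewrite /= /stretch /K; nia.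
have valid_b b : b \in s -> (l * (M + l) <= wo b * (M + l) + b lst * l)%N.
  by move/(allP valid_s).
exists [seq with_lst b (b lst - (l - wo b)) | b <- s]; split.
- by rewrite size_map.
- apply/allP => _ /mapP [b /valid_b le_b ->]; rewrite /= stretch_with_lst; nia.
rewrite -[X in (_ <= X)%MM]with_lst_id -(with_lstK a (a lst + K)) big_map.
apply: (le_sum_with_lst le_s).
have lst_s := lst_sum_le le_s; rewrite with_lstE eqxx in lst_s.
have wo_s := wo_sum_le le_s; rewrite wo_with_lst in wo_s.
have deficit_s : (k * l <= \sum_(b <- s) (l - wo b) + \sum_(b <- s) wo b)%N.
  rewrite -size_s -big_split /=; apply: sum_const_le => b.
  by rewrite addnC -leq_subLR.
have : (\sum_(b <- s) b lst <= a lst + \sum_(b <- s) (l - wo b))%N.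
  by move: lst_s; rewrite /K; lia.
by move/sum_subn_leq; apply=> b /valid_b; nia.
Qed.

Lemma integer_decomposition_stretch_add M : (0 < l)%N -> (l <= M)%N ->
  integer_decomposition (stretch M) (l * M) ->
  integer_decomposition (stretch (M + l)) (l * (M + l)).
Proof.
move=> l_gt0 le_lM idp k a le_a; set K := (k * l - wo a)%N.
have [q /andP [le_MKq lt_q]] := ceil_mul_between (M * K) l_gt0.
have le_qa : (q + K <= a lst)%N by move: le_a; rewrite /= /stretch /K; nia.
have [s [size_s valid_s le_s]] : decomposable (stretch M) (l * M) k (with_lst a q).
  by apply: idp; rewrite /= stretch_with_lst; rewrite /K in le_MKq; nia.
have valid_b b : b \in s -> (l * M <= wo b * M + b lst * l)%N by move/(allP valid_s).
exists [seq with_lst b (b lst + (l - wo b)) | b <- s]; split.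
- by rewrite size_map.
- by apply/allP => _ /mapP [b /valid_b le_b ->]; rewrite /= stretch_with_lst; nia.
rewrite -[X in (_ <= X)%MM]with_lst_id -(with_lstK a q) big_map.
apply: (le_sum_with_lst le_s); rewrite big_split /=.
have lst_s := lst_sum_le le_s; rewrite with_lstE eqxx in lst_s.
have : (M * \sum_(b <- s) (l - wo b) <= l * \sum_(b <- s) b lst)%N.
  by rewrite !big_distrr /= !big_seq; apply: leq_sum => b /valid_b; nia.
have : (l * \sum_(b <- s) b lst <= l * q)%N by rewrite leq_mul2l lst_s orbT.
nia.
Qed.

End StretchedWeight.

Section LinearWeight.
Variables (n : nat) (om : 'I_n -> nat).

Definition lin_weight (m : 'X_{1..n}) := (\sum_i m i * om i)%N.

Lemma lin_weight0 : lin_weight 0%MM = 0%N.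
Proof. by rewrite /lin_weight big1 // => i _; rewrite mnm0E. Qed.

Lemma lin_weightD : {morph lin_weight : m1 m2 / (m1 + m2)%MM >-> (m1 + m2)%N}.
Proof.
by move=> m1 m2; rewrite /lin_weight -big_split; apply: eq_bigr => i _; rewrite mnmDE mulnDl.
Qed.

HB.instance Definition _ := isMeasure.Build n lin_weight lin_weight0 lin_weightD.

Lemma lin_weightU i : lin_weight U_(i)%MM = om i.
Proof.
rewrite /lin_weight (bigD1 i) //= mnm1E eqxx mul1n big1 ?addn0 // => j ne_ji.
by rewrite mnm1E eq_sym (negbTE ne_ji).
Qed.

End LinearWeight.

Section LcmWeight.
Variables (K : fieldType) (n : nat) (lam : 'I_n -> nat) (lst : 'I_n) (l : nat).
Hypothesis l_gt0 : (0 < l)%N.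
Hypothesis lam_dvd : forall i, i != lst -> (lam i %| l)%N.

Definition lcm_weight : measure n := lin_weight (fun i => if i == lst then 0%N else (l %/ lam i)%N).

Lemma lcm_weight_lst : lcm_weight U_(lst)%MM = 0%N.
Proof. by rewrite /lcm_weight /= lin_weightU eqxx. Qed.

Lemma normal_Imu_iff_stretch (mu : 'I_n -> nat) :
  (forall i, i != lst -> mu i = lam i) -> (0 < mu lst)%N ->
  normal_ideal (@Imu K n mu) <->
  integer_decomposition (stretch lcm_weight lst l (mu lst)) (l * mu lst).
Proof.
move=> mu_lam mu_gt0; apply: normal_Imu_iff; first by rewrite muln_gt0 l_gt0.
move=> i; rewrite /= /stretch /lcm_weight /= lin_weightU mnm1E.
case: eqP => [->|/eqP ne_il]; first by rewrite mul0n add0n mul1n mulnC.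
by rewrite mu_lam // mul0n addn0 mulnA [(lam i * _)%N]mulnC divnK ?lam_dvd.
Qed.

End LcmWeight.

Lemma lcm_init_gt0 n (lam : 'I_n -> nat) : (forall i, 0 < lam i)%N -> (0 < lcm_init lam)%N.
Proof.
move=> lam_gt0; apply: (big_ind (fun x => 0 < x)%N) => // x y x_gt0 y_gt0.
by rewrite lcmn_gt0 x_gt0.
Qed.

Lemma dvdn_lcm_init n (lam : 'I_n -> nat) i : (val i < n.-1)%N -> (lam i %| lcm_init lam)%N.
Proof. by move=> lt_i; apply: (biglcmn_sup i). Qed.

Theorem theorem5p1 (K : fieldType) (n : nat) (lam : 'I_n -> nat) :
  (2 <= n)%N ->
  (forall i, (0 < lam i)%N) ->
  (normal_ideal (@Imu K n (lam_shift lam)) -> normal_ideal (@Imu K n lam)) /\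
  ((forall i : 'I_n, val i = n.-1 -> (lcm_init lam <= lam i)%N) ->
     normal_ideal (@Imu K n lam) -> normal_ideal (@Imu K n (lam_shift lam))).
Proof.
move=> n_ge2 lam_gt0; have lt_lst : (n.-1 < n)%N by rewrite prednK // ltnW.
pose lst := Ordinal lt_lst; set l := lcm_init lam.
have l_gt0 : (0 < l)%N by apply: lcm_init_gt0.
have val_lst i : (i != lst) = (val i != n.-1) by rewrite -val_eqE.
have lam_dvd i : i != lst -> (lam i %| l)%N.
  rewrite val_lst => ne_i; apply: dvdn_lcm_init.
  by rewrite ltn_neqAle ne_i -ltnS prednK ?ltn_ord // ltnW.
have shift_lst : lam_shift lam lst = (lam lst + l)%N by rewrite /lam_shift eqxx.
have shift_lam i : i != lst -> lam_shift lam i = lam i.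
  by rewrite val_lst /lam_shift => /negbTE ->.
have iff_lam := normal_Imu_iff_stretch K l_gt0 lam_dvd (fun _ _ => erefl) (lam_gt0 lst).
have := normal_Imu_iff_stretch K l_gt0 lam_dvd shift_lam.
rewrite shift_lst addn_gt0 lam_gt0 => /(_ isT) iff_shift.
have wo_lst := lcm_weight_lst lam lst l.
split=> [/iff_shift idp | le_l /iff_lam idp].
  exact/iff_lam/(integer_decomposition_stretch_sub (l := l) wo_lst idp).
exact/iff_shift/(integer_decomposition_stretch_add (l := l) wo_lst l_gt0 (le_l lst erefl) idp).
Qed.
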